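(* Let $n\ge2$, $\mathbf{q}\in\mathbb{R}^n$ and $1/n<t<1$. For $z\in\mathbb{R}$ let $\mathbf{v}(z)\in\mathbb{R}^n$ have entries $\mathbf{v}_i(z)=\max(0,\mathbf{q}_i-z)$ and let $$h(z)=\begin{cases}\sqrt t\,\|\mathbf{v}(z)\|_2+z & \text{if } z<\max_i\mathbf{q}_i,\\ z & \text{otherwise.}\end{cases}$$ Then $h$ is convex, attains its minimum on $\mathbb{R}$, and $$\max_{\mathbf{p}\in P(t)}\mathbf{p}\cdot\mathbf{q}=\min_{z\in\mathbb{R}}h(z).$$ Moreover, if $z^*$ is a minimizer of $h$ with $z^*<\max_i\mathbf{q}_i$, then $\mathbf{p}^*=\sqrt t\,\mathbf{v}(z^* )/\|\mathbf{v}(z^* )\|_2$ is a maximizer of $\mathbf{p}\cdot\mathbf{q}$ over $P(t)$; if $z^*=\max_i\mathbf{q}_i$ is a minimizer, then the vector $\mathbf{p}^*$ with $\mathbf{p}^*_i=1/|S|$ for $i\in S=\{i:\mathbf{q}_i=\max_j\mathbf{q}_j\}$ and $\mathbf{p}^*_i=0$ otherwise is a maximizer.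
   Context: $P(t)=\{\mathbf{p}\in\mathbb{R}^n:\mathbf{p}\ge0,\ \sum_i\mathbf{p}_i=1,\ \mathbf{p}\cdot\mathbf{p}\le t\}$. *)

From HB Require Import structures.
From mathcomp Require Import all_boot all_order all_algebra.
From mathcomp Require Import reals.
Set Implicit Arguments. Unset Strict Implicit. Unset Printing Implicit Defensive.
Import Order.TTheory GRing.Theory Num.Theory.
Local Open Scope ring_scope.

Definition dotp (R : realType) (n : nat) (p q : 'I_n -> R) : R :=
  \sum_(i < n) p i * q i.

Definition Pt (R : realType) (n : nat) (t : R) (p : 'I_n -> R) : Prop :=
  (forall i, 0 <= p i) /\ \sum_(i < n) p i = 1 /\ dotp p p <= t.

Definition vz (R : realType) (n : nat) (q : 'I_n -> R) (z : R) : 'I_n -> R :=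
  fun i => Num.max 0 (q i - z).

Definition norm2 (R : realType) (n : nat) (x : 'I_n -> R) : R :=
  Num.sqrt (dotp x x).

(* max_i q_i (meaningful for n >= 1; the seed q (inord 0) is one of the entries) *)
Definition qmax (R : realType) (n : nat) (q : 'I_n.+1 -> R) : R :=
  \big[Num.max/q ord0]_(i < n.+1) q i.

Definition hfun (R : realType) (n : nat) (t : R) (q : 'I_n.+1 -> R) (z : R) : R :=
  if z < qmax q then Num.sqrt t * norm2 (vz q z) + z else z.

Definition convex_on_R (R : realType) (f : R -> R) : Prop :=
  forall (x y lam : R), 0 <= lam <= 1 ->
    f (lam * x + (1 - lam) * y) <= lam * f x + (1 - lam) * f y.

Definition is_max_on_Pt (R : realType) (n : nat) (t : R) (q p : 'I_n -> R) : Prop :=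
  Pt t p /\ forall p', Pt t p' -> dotp p' q <= dotp p q.

From HB Require Import structures.
From mathcomp Require Import all_boot all_order all_algebra.
From mathcomp Require Import reals.
From mathcomp Require Import ring lra.
From mathcomp Require Import all_classical all_analysis.
Set Implicit Arguments. Unset Strict Implicit. Unset Printing Implicit Defensive.
Import Order.TTheory GRing.Theory Num.Theory.
Import numFieldNormedType.Exports.
Local Open Scope ring_scope.

(* Weak duality: for [p] in [P(t)], Cauchy-Schwarz gives
   [p.q = p.(q - z) + z <= p.v(z) + z <= |p| |v(z)| + z <= sqrt t |v(z)| + z = h(z)],
   so a feasible [p] and a [z] with [p.q = h(z)] are optimal on both sides.  Such a
   pair comes from a minimiser [z] of [h], which exists because [h] is continuous,
   equals [z] beyond [max q], and grows like [(sqrt (t n) - 1) |z|] at [-oo].  If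
   [z < max q], comparing [h z] with [h (z + d)] for all [d] yields a quadratic in [d]
   whose discriminant forces [sqrt t * sum v(z) = |v(z)|], i.e. the normalised
   [sqrt t v(z) / |v(z)|] is a probability vector.  If [z = max q], comparing with
   [h (max q - eps)] for a small [eps] forces [t |S| >= 1], which makes the uniform
   vector on [S] feasible. *)

Lemma quadratic_ge0_discr (R : realFieldType) (a b c : R) :
  0 < c -> (forall d, 0 <= a + 2 * b * d + c * d ^+ 2) -> b ^+ 2 <= a * c.
Proof.
move=> c_gt0 /(_ (- b / c)).
have -> : a + 2 * b * (- b / c) + c * (- b / c) ^+ 2 = (a * c - b ^+ 2) / c.
  by field; rewrite gt_eqF.
by rewrite pmulr_lge0 ?invr_gt0 // subr_ge0.
Qed.

Section Euclidean.
Variables (R : realType) (n : nat).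
Implicit Types a b : 'I_n -> R.

Lemma dotpp_ge0 a : 0 <= dotp a a.
Proof. by rewrite sumr_ge0 // => i _; rewrite -expr2 sqr_ge0. Qed.

Lemma dotpp_eq0 a : dotp a a = 0 -> forall i, a i = 0.
Proof.
move=> /eqP; rewrite psumr_eq0 => [/allP a0 i|i _]; last by rewrite -expr2 sqr_ge0.
by apply/eqP; have := a0 i (mem_index_enum _); rewrite /= mulf_eq0 orbb.
Qed.

Lemma dotp_lincomb a b l m :
  dotp (fun i => l * a i + m * b i) (fun i => l * a i + m * b i) =
  l ^+ 2 * dotp a a + 2 * l * m * dotp a b + m ^+ 2 * dotp b b.
Proof.
rewrite /dotp !mulr_sumr -!big_split /=.
by apply: eq_bigr => i _; ring.
Qed.

Lemma cauchy_schwarz a b : dotp a b ^+ 2 <= dotp a a * dotp b b.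
Proof.
have [bb0|] := eqVneq (dotp b b) 0.
  by rewrite bb0 mulr0 /dotp big1 ?expr0n // => i _; rewrite (dotpp_eq0 bb0) mulr0.
rewrite neq_lt ltNge dotpp_ge0 /= => bb_gt0.
apply: quadratic_ge0_discr bb_gt0 _ => d.
have := dotpp_ge0 (fun i => 1 * a i + d * b i).
by rewrite dotp_lincomb expr1n mul1r mulr1 [2 * d * _]mulrAC [d ^+ 2 * _]mulrC.
Qed.

Lemma norm2_ge0 a : 0 <= norm2 a.
Proof. exact: sqrtr_ge0. Qed.

Lemma norm2_sqr a : norm2 a ^+ 2 = dotp a a.
Proof. by rewrite sqr_sqrtr // dotpp_ge0. Qed.

Lemma dotp_le_norm2 a b : dotp a b <= norm2 a * norm2 b.
Proof.
rewrite (le_trans (ler_norm _)) // -sqrtr_sqr -sqrtrM ?dotpp_ge0 //.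
exact/ler_wsqrtr/cauchy_schwarz.
Qed.

Lemma norm2_le a b : (forall i, 0 <= a i <= b i) -> norm2 a <= norm2 b.
Proof.
move=> ab; apply/ler_wsqrtr/ler_sum => i _.
by have /andP[a_ge0 a_le] := ab i; rewrite ler_pM.
Qed.

Lemma norm2_cst (c : R) : 0 <= c -> norm2 (fun _ : 'I_n => c) = Num.sqrt n%:R * c.
Proof.
move=> c_ge0; rewrite /norm2 /dotp sumr_const card_ord -[_ *+ n]mulr_natl.
by rewrite sqrtrM ?ler0n // -expr2 sqrtr_sqr ger0_norm.
Qed.

Lemma norm2_sublinear a b l m : 0 <= l -> 0 <= m ->
  norm2 (fun i => l * a i + m * b i) <= l * norm2 a + m * norm2 b.
Proof.
move=> l_ge0 m_ge0; set r := l * norm2 a + m * norm2 b.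
have r_ge0 : 0 <= r by rewrite addr_ge0 // mulr_ge0 // norm2_ge0.
rewrite -(ger0_norm r_ge0) -sqrtr_sqr ler_wsqrtr // dotp_lincomb -!norm2_sqr.
have -> : r ^+ 2 = l ^+ 2 * norm2 a ^+ 2 + 2 * l * m * (norm2 a * norm2 b)
                   + m ^+ 2 * norm2 b ^+ 2 by rewrite /r; ring.
by rewrite lerD2r lerD2l ler_wpM2l ?dotp_le_norm2 // !mulr_ge0.
Qed.

Lemma continuous_sum (I : Type) (s : seq I) (f : I -> R -> R) :
  (forall i, continuous (f i)) -> continuous (fun z => \sum_(i <- s) f i z).
Proof.
move=> f_cont; elim: s => [|i s IHs].
  under eq_fun do rewrite big_nil.
  exact: cst_continuous.
under eq_fun do rewrite big_cons.
by move=> z; apply: continuousD; [exact: f_cont | exact: IHs].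
Qed.

Lemma continuous_norm2 (f : 'I_n -> R -> R) :
  (forall i, continuous (f i)) -> continuous (fun z => norm2 (fun i => f i z)).
Proof.
move=> f_cont z; apply: (@continuous_comp _ _ _ (fun z => dotp (f^~ z) (f^~ z))).
  by apply: continuous_sum => i x; apply: continuousM; exact: f_cont.
exact: (@sqrt_continuous R).
Qed.

End Euclidean.

Section Hinge.
Variables (R : realType) (n : nat) (q : 'I_n -> R).

Lemma vzE z i : vz q z i = if z <= q i then q i - z else 0.
Proof. by rewrite /vz -subr_ge0; case: leP. Qed.

Lemma vz_ge0 z i : 0 <= vz q z i.
Proof. by rewrite /vz le_max lexx. Qed.

Lemma vz_ge z i : q i - z <= vz q z i.
Proof. by rewrite /vz le_max lexx orbT. Qed.

Lemma vz_sqr z i : vz q z i * vz q z i = vz q z i * (q i - z).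
Proof. by rewrite vzE; case: ifP; rewrite ?mul0r. Qed.

Lemma vz_convex z1 z2 l i : 0 <= l <= 1 ->
  vz q (l * z1 + (1 - l) * z2) i <= l * vz q z1 i + (1 - l) * vz q z2 i.
Proof.
move=> /andP[l_ge0 l_le1]; have l'_ge0 : 0 <= 1 - l by rewrite subr_ge0.
rewrite /vz ge_max addr_ge0 ?mulr_ge0 ?vz_ge0 //=.
have -> : q i - (l * z1 + (1 - l) * z2) = l * (q i - z1) + (1 - l) * (q i - z2).
  by ring.
by rewrite lerD ?ler_wpM2l ?vz_ge.
Qed.

Lemma vz_shift_sqr z d i : vz q (z + d) i ^+ 2 <= (vz q z i - d) ^+ 2.
Proof.
rewrite [X in X ^+ 2 <= _]vzE; case: ifP => [zd_le|_]; last by rewrite expr0n sqr_ge0.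
rewrite !expr2 ler_pM // ?subr_ge0 // opprD addrA lerD2r.
  exact: vz_ge.
all: by rewrite (le_trans _ (vz_ge z i)) // lerBrDr -addrA addrC.
Qed.

Lemma norm2_vz_shift z d :
  norm2 (vz q (z + d)) ^+ 2 <=
  norm2 (vz q z) ^+ 2 - 2 * d * \sum_i vz q z i + n%:R * d ^+ 2.
Proof.
rewrite !norm2_sqr; apply: (le_trans (y := \sum_i (vz q z i - d) ^+ 2)).
  by apply: ler_sum => i _; rewrite -expr2 vz_shift_sqr.
rewrite (eq_bigr (fun i => vz q z i * vz q z i - 2 * d * vz q z i + d ^+ 2));
  last by move=> i _; ring.
by rewrite !big_split /= sumrN -mulr_sumr sumr_const card_ord -[_ *+ n]mulr_natl.
Qed.

Lemma continuous_vz i : continuous (fun z => vz q z i).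
Proof.
move=> z; have cst0 : {for z, continuous (fun _ : R => 0 : R)}.
  exact: cst_continuous.
have qiB : {for z, continuous (fun z : R => q i - z)}.
  by apply: continuousB; [exact: cst_continuous | exact: cvg_id].
exact: continuous_max cst0 qiB.
Qed.

End Hinge.

Section Duality.
Variables (R : realType) (n : nat) (t : R) (q : 'I_n.+1 -> R).

Local Notation M := (qmax q).
Local Notation h := (hfun t q).

Definition scaled_vz (z : R) : 'I_n.+1 -> R :=
  fun i => Num.sqrt t * vz q z i / norm2 (vz q z).

Definition unif_argmax : 'I_n.+1 -> R :=
  fun i => if q i == M then (#|[set j | q j == M]|%:R)^-1 else 0.

Lemma qmax_ge i : q i <= M.
Proof. exact: le_bigmax. Qed.

Lemma qmax_attained : exists i, q i = M.
Proof.
apply: (big_ind (fun x => exists i, q i = x)) => [|x y [i <-] [j <-]|i _].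
- by exists ord0.
- by case: leP => _; [exists j | exists i].
- by exists i.
Qed.

Lemma hfun_id z : M <= z -> h z = z.
Proof. by rewrite /hfun leNgt => /negbTE ->. Qed.

Lemma hfunE z : h z = Num.sqrt t * norm2 (vz q z) + z.
Proof.
rewrite /hfun; case: ltP => // Mz.
suff -> : vz q z = fun=> 0 by rewrite norm2_cst // mulr0 mulr0 add0r.
apply/funext => i; rewrite /vz; apply/max_idPl.
by rewrite subr_le0 (le_trans (qmax_ge i)).
Qed.

Lemma hfun_convex : 0 <= t -> convex_on_R h.
Proof.
move=> t_ge0 x y l /[dup] l01 /andP[l_ge0 l_le1]; rewrite !hfunE.
have l'_ge0 : 0 <= 1 - l by rewrite subr_ge0.
have norm_convex : norm2 (vz q (l * x + (1 - l) * y)) <=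
    l * norm2 (vz q x) + (1 - l) * norm2 (vz q y).
  apply: le_trans (norm2_sublinear _ _ l_ge0 l'_ge0).
  by apply: norm2_le => i; rewrite vz_ge0 vz_convex.
have := ler_wpM2l (sqrtr_ge0 t) norm_convex; lra.
Qed.

Lemma continuous_hfun : continuous h.
Proof.
rewrite (funext hfunE) => z.
have cst_t : {for z, continuous (fun=> Num.sqrt t)} by exact: cst_continuous.
have norm_vz : {for z, continuous (fun z => norm2 (vz q z))}.
  by apply: continuous_norm2 => i; exact: continuous_vz.
exact: continuousD (continuousM cst_t norm_vz) cvg_id.
Qed.

Lemma hfun_coercive : 0 <= t -> 1 < t * n.+1%:R ->
  exists2 a, a <= M & forall z, z <= a -> M <= h z.
Proof.
move=> t_ge0 tn_gt1; set L := \big[Num.min/q ord0]_i q i.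
have L_le i : L <= q i by exact: bigmin_le.
have LM : L <= M := le_trans (L_le ord0) (qmax_ge ord0).
set c := Num.sqrt (t * n.+1%:R).
have c_gt1 : 1 < c by rewrite -sqrtr1 ltr_sqrt // (lt_trans ltr01).
have shift_ge0 : 0 <= (M - L) / (c - 1) by rewrite divr_ge0 ?subr_ge0 // ltW.
exists (L - (M - L) / (c - 1)) => [|z za]; first lra.
have zL : z <= L by lra.
have gap : M - L <= (L - z) * (c - 1).
  by rewrite -ler_pdivrMr ?subr_gt0 //; lra.
have norm_ge : Num.sqrt n.+1%:R * (L - z) <= norm2 (vz q z).
  rewrite -norm2_cst ?subr_ge0 //; apply: norm2_le => i.
  by rewrite subr_ge0 zL (le_trans _ (vz_ge q z i)) // lerD2r.
have : c * (L - z) <= Num.sqrt t * norm2 (vz q z).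
  by rewrite /c sqrtrM // -mulrA ler_wpM2l ?sqrtr_ge0.
rewrite hfunE; nra.
Qed.

Lemma hfun_attains_min : 0 <= t -> 1 < t * n.+1%:R ->
  exists z, forall z', h z <= h z'.
Proof.
move=> t_ge0 tn_gt1; have [a aM coercive] := hfun_coercive t_ge0 tn_gt1.
have h_cont : {within `[a, M], continuous h}%classic.
  by apply: continuous_subspaceT; exact: continuous_hfun.
have [z _ zmin] := EVT_min aM h_cont.
have zM : h z <= M by rewrite -[leRHS](hfun_id (lexx M)) zmin // in_itv /= aM lexx.
exists z => z'; have [z'a|az'] := leP z' a; first exact: le_trans zM (coercive _ z'a).
have [z'M|Mz'] := leP z' M; first by rewrite zmin // in_itv /= z'M ltW.
by rewrite [h z']hfun_id ?ltW //; lra.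
Qed.

Lemma dotp_le_hfun p z : Pt t p -> dotp p q <= h z.
Proof.
move=> [p_ge0 [p_sum1 pp_le]]; rewrite hfunE.
have -> : dotp p q = dotp p (fun i => q i - z) + z * \sum_i p i.
  by rewrite /dotp mulr_sumr -big_split; apply: eq_bigr => i _ /=; ring.
rewrite p_sum1 mulr1 lerD2r.
have p_vz : dotp p (fun i => q i - z) <= dotp p (vz q z).
  by apply: ler_sum => i _; rewrite ler_wpM2l ?vz_ge.
have p_norm : norm2 p <= Num.sqrt t by apply: ler_wsqrtr.
apply: (le_trans p_vz); apply: (le_trans (dotp_le_norm2 p (vz q z))).
by rewrite ler_wpM2r ?norm2_ge0.
Qed.

Lemma optimal_of_dotp_eq_hfun p z : Pt t p -> dotp p q = h z ->
  (forall z', h z <= h z') /\ is_max_on_Pt t q p.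
Proof.
move=> pP pq; split=> [z'|]; first by rewrite -pq dotp_le_hfun.
by split=> // p' p'P; rewrite pq dotp_le_hfun.
Qed.

Lemma norm2_vz_gt0 z : z < M -> 0 < norm2 (vz q z).
Proof.
move=> zM; have [i qiM] := qmax_attained.
have vi_gt0 : 0 < vz q z i by rewrite (lt_le_trans _ (vz_ge q z i)) // subr_gt0 qiM.
rewrite sqrtr_gt0 /dotp (bigD1 i) //= ltr_pwDl ?mulr_gt0 ?sumr_ge0 // => j _.
by rewrite -expr2 sqr_ge0.
Qed.

Lemma scaled_vz_value z : 0 <= t -> z < M ->
  Num.sqrt t * \sum_i vz q z i = norm2 (vz q z) ->
  Pt t (scaled_vz z) /\ dotp (scaled_vz z) q = h z.
Proof.
move=> t_ge0 zM balance; rewrite /scaled_vz.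
set st := Num.sqrt t in balance *; set N := norm2 (vz q z) in balance *.
have N_neq0 : N != 0 by rewrite gt_eqF ?norm2_vz_gt0.
have vv : dotp (vz q z) (vz q z) = N ^+ 2 by rewrite norm2_sqr.
split; first split=> [i|].
- by rewrite divr_ge0 ?mulr_ge0 ?sqrtr_ge0 ?vz_ge0 ?norm2_ge0.
- split; first by rewrite -mulr_suml -mulr_sumr balance divff.
  have -> : dotp (fun i => st * vz q z i / N) (fun i => st * vz q z i / N) =
      (st / N) ^+ 2 * dotp (vz q z) (vz q z).
    by rewrite /dotp mulr_sumr; apply: eq_bigr => i _; ring.
  by rewrite vv -exprMn divfK // sqr_sqrtr.
- have vq : dotp (vz q z) q = N ^+ 2 + z * \sum_i vz q z i.
    rewrite -vv /dotp mulr_sumr -big_split; apply: eq_bigr => i _ /=.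
    by rewrite vz_sqr; ring.
  have -> : dotp (fun i => st * vz q z i / N) q = st / N * dotp (vz q z) q.
    by rewrite /dotp mulr_sumr; apply: eq_bigr => i _; ring.
  rewrite hfunE -/st -/N vq.
  have -> : st / N * (N ^+ 2 + z * \sum_i vz q z i) =
      st * N + z * (st * \sum_i vz q z i) / N by field.
  by rewrite balance mulfK.
Qed.

Lemma argmin_balance z : 0 < t -> (forall z', h z <= h z') -> z < M ->
  Num.sqrt t * \sum_i vz q z i = norm2 (vz q z).
Proof.
move=> t_gt0 zmin zM.
set st := Num.sqrt t; set N := norm2 (vz q z); set s := \sum_i vz q z i.
have st_gt0 : 0 < st by rewrite sqrtr_gt0.
have N_gt0 : 0 < N by rewrite norm2_vz_gt0.
have quadratic d : 0 <= 0 + 2 * (N - st * s) * d + st * n.+1%:R * d ^+ 2.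
  set N' := norm2 (vz q (z + d)).
  have step : st * N <= st * N' + d.
    by have := zmin (z + d); rewrite !hfunE -/st -/N -/N'; lra.
  have shift : N' ^+ 2 <= N ^+ 2 - 2 * d * s + n.+1%:R * d ^+ 2.
    exact: norm2_vz_shift.
  have amgm : 2 * N * N' <= N ^+ 2 + N' ^+ 2.
    by rewrite -subr_ge0 -[X in 0 <= X](_ : (N - N') ^+ 2 = _) ?sqr_ge0 //; ring.
  have P1 := ler_wpM2l (mulr_ge0 (ler0n _ 2) (ltW N_gt0)) step.
  have P2 := ler_wpM2l (ltW st_gt0) (le_trans amgm (lerD (lexx _) shift)).
  clear -P1 P2; lra.
have := quadratic_ge0_discr (mulr_gt0 st_gt0 (ltr0Sn _ _)) quadratic.
rewrite mul0r => discr_le0; apply/eqP.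
by rewrite eq_sym -subr_eq0 -sqrf_eq0 eq_le discr_le0 sqr_ge0.
Qed.

Local Notation card_argmax := (#|[set j | q j == M]|%:R : R).

Lemma card_argmax_gt0 : 0 < card_argmax.
Proof.
have [i qiM] := qmax_attained.
by rewrite ltr0n; apply/card_gt0P; exists i; rewrite inE qiM.
Qed.

Lemma sum_argmax (c : R) : \sum_i (if q i == M then c else 0) = c * card_argmax.
Proof.
rewrite -big_mkcond /= (eq_bigl (fun i => i \in [set j | q j == M])) => [|i].
  by rewrite sumr_const mulr_natr.
by rewrite inE.
Qed.

Lemma unif_argmax_value : 1 <= t * card_argmax ->
  Pt t unif_argmax /\ dotp unif_argmax q = h M.
Proof.
move=> tk_ge1; have k_gt0 := card_argmax_gt0.
have k_neq0 : card_argmax != 0 by rewrite gt_eqF.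
rewrite /unif_argmax /dotp; split; first split=> [i|].
- by case: ifP; rewrite // invr_ge0 ltW.
- rewrite sum_argmax mulVf //; split=> //.
  rewrite /dotp (eq_bigr (fun i => if q i == M then card_argmax^-1 / card_argmax else 0)).
    by rewrite sum_argmax divfK // -div1r ler_pdivrMr.
  by move=> i _; case: ifP; rewrite ?mul0r.
- rewrite hfun_id // (eq_bigr (fun i => if q i == M then card_argmax^-1 * M else 0)).
    by rewrite sum_argmax mulrAC mulVf ?mul1r.
  by move=> i _; case: ifP => [/eqP ->|]; rewrite ?mul0r.
Qed.

Lemma qmax_gap : exists2 eps : R, 0 < eps & forall i, q i != M -> eps <= M - q i.
Proof.
exists (\big[Num.min/1]_(i | q i != M) (M - q i)) => [|i qiM]; last exact: bigmin_le_cond.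
apply: (big_ind (fun x => 0 < x)) => // [x y x_gt0 y_gt0|i qiM].
  by rewrite lt_min x_gt0.
by rewrite subr_gt0 lt_neqAle qiM qmax_ge.
Qed.

Lemma argmin_qmax_card : 0 <= t -> (forall z, h M <= h z) -> 1 <= t * card_argmax.
Proof.
move=> t_ge0 Mmin; have [eps eps_gt0 gap] := qmax_gap.
have v_eps i : vz q (M - eps) i = if q i == M then eps else 0.
  rewrite /vz; case: eqP => [->|/eqP qiM].
    by rewrite opprB addrC subrK; apply/max_idPr/ltW.
  by apply/max_idPl; have := gap i qiM; lra.
have norm_eps : norm2 (vz q (M - eps)) = eps * Num.sqrt card_argmax.
  rewrite /norm2 /dotp (eq_bigr (fun i => if q i == M then eps ^+ 2 else 0)) => [|i _].
    by rewrite sum_argmax sqrtrM ?sqr_ge0 // sqrtr_sqr ger0_norm ?ltW.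
  by rewrite v_eps; case: ifP; rewrite ?mul0r.
have := Mmin (M - eps); rewrite hfun_id // hfunE norm_eps.
have -> : Num.sqrt t * (eps * Num.sqrt card_argmax) =
    eps * Num.sqrt (t * card_argmax) by rewrite sqrtrM //; ring.
move=> ineq; rewrite -(ler_sqrt _ (mulr_ge0 t_ge0 (ltW card_argmax_gt0))) sqrtr1.
by rewrite -(ler_pM2l eps_gt0) mulr1; lra.
Qed.

Lemma argmin_certificate z : 0 < t -> (forall z', h z <= h z') ->
  exists p, Pt t p /\ dotp p q = h z.
Proof.
move=> t_gt0 zmin; have [zM|Mz] := ltP z M.
  exists (scaled_vz z).
  exact: scaled_vz_value (ltW t_gt0) zM (argmin_balance t_gt0 zmin zM).
have hzM : h z = h M by apply/eqP; rewrite eq_le zmin hfun_id // hfun_id.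
have Mmin z' : h M <= h z' by rewrite -hzM.
exists unif_argmax; rewrite hzM.
exact: unif_argmax_value (argmin_qmax_card (ltW t_gt0) Mmin).
Qed.

End Duality.

Theorem mainTheorem11 (R : realType) (m : nat) (q : 'I_m.+2 -> R) (t : R)
    (ht1 : (m.+2)%:R^-1 < t) (ht2 : t < 1) :
  convex_on_R (hfun t q) /\
  (exists zmin : R, forall z : R, hfun t q zmin <= hfun t q z) /\
  (exists pmax : 'I_m.+2 -> R, is_max_on_Pt t q pmax) /\
  (forall (pmax : 'I_m.+2 -> R) (zmin : R),
      is_max_on_Pt t q pmax ->
      (forall z : R, hfun t q zmin <= hfun t q z) ->
      dotp pmax q = hfun t q zmin) /\
  (forall zs : R, (forall z : R, hfun t q zs <= hfun t q z) ->
      zs < qmax q ->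
      is_max_on_Pt t q (fun i => Num.sqrt t * vz q zs i / norm2 (vz q zs))) /\
  ((forall z : R, hfun t q (qmax q) <= hfun t q z) ->
      is_max_on_Pt t q
        (fun i => if q i == qmax q
                  then (#|[set j | q j == qmax q]|%:R)^-1 else 0)).
Proof.
have t_gt0 : 0 < t by apply: lt_trans ht1; rewrite invr_gt0 ltr0n.
have tn_gt1 : 1 < t * m.+2%:R by rewrite -ltr_pdivrMr ?ltr0n // div1r.
have [zmin zminP] := hfun_attains_min q (ltW t_gt0) tn_gt1.
have [p [pP pq]] := argmin_certificate t_gt0 zminP.
split; first exact/hfun_convex/ltW.
split; first by exists zmin.
split; first by exists p; exact: (optimal_of_dotp_eq_hfun pP pq).2.
split.
  move=> p' z' [p'P p'max] z'min; apply/eqP; rewrite eq_le dotp_le_hfun //=.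
  by rewrite (le_trans (z'min zmin)) // -pq p'max.
split.
  move=> zs zsmin zsM.
  have [sP sq] := scaled_vz_value (ltW t_gt0) zsM (argmin_balance t_gt0 zsmin zsM).
  exact: (optimal_of_dotp_eq_hfun sP sq).2.
move=> Mmin.
have [uP uq] := unif_argmax_value (argmin_qmax_card (ltW t_gt0) Mmin).
exact: (optimal_of_dotp_eq_hfun uP uq).2.
Qed.
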